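(* Assume $2\hat P-P+A_2^TA_2$ is symmetric positive definite. Then the eigenpairs of $\mathcal{M}_4^{-1}\mathcal{A}$ have the following structure: (i) $\mu=1$ is an eigenvalue with geometric multiplicity $p+q+d$, where $d=\dim\big(\mathcal{N}(\hat P-P)\cap\mathcal{N}(A_2)\big)$; a basis of the eigenspace consists of the $p+q$ vectors $(x_i;0;0)$, $(0;0;z_j)$, with $\{x_i\}_{i=1}^p$, $\{z_j\}_{j=1}^q$ bases of $\mathbb{R}^p$, $\mathbb{R}^q$, together with the $d$ vectors $(0;y_k;0)$, where $\{y_k\}_{k=1}^d$ is a basis of $\mathcal{N}(\hat P-P)\cap\mathcal{N}(A_2)$. (ii) If $\mu\ne1$ is an eigenvalue, every corresponding eigenvector has the form $\left(-A_1y;\,y;\,\frac{1}{\mu-1}A_2y\right)$ where $y\neq0$ satisfies $\hat P^{-1}(P-A_2^TA_2)y=\mu y$ (and conversely); the geometric multiplicity $h_\mu$ of $\mu$ is the number of linearly independent such $y$, and if $h$ is the total number of linearly independent eigenvectors for non-unit eigenvalues, then $0\le h_\mu\le h\le n$ and $\mathcal{M}_4^{-1}\mathcal{A}$ has $p+q+d+h$ linearly independent eigenvectors. (iii) All eigenvalues of $\mathcal{M}_4^{-1}\mathcal{A}$ are real and lie in the interval $(0,2)$.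
   Context: Let $A_1\in\mathbb{R}^{p\times n}$ have full column rank and $A_2\in\mathbb{R}^{q\times n}$. Set $P=A_1^TA_1$ and assume $P-A_2^TA_2$ is symmetric positive definite. Let $\hat P\in\mathbb{R}^{n\times n}$ be symmetric positive definite. Define $\mathcal{A}=\begin{pmatrix}I_p&A_1&0\\0&P&A_2^T\\0&A_2&I_q\end{pmatrix}$ and $\mathcal{M}_4=\begin{pmatrix}I_p&A_1&0\\0&\hat P&A_2^T\\0&0&I_q\end{pmatrix}$. Vectors are written $(x;y;z)$ with $x\in\mathbb{C}^p,y\in\mathbb{C}^n,z\in\mathbb{C}^q$. $\mathcal{N}(\cdot)$ denotes null space. *)

(* matrices over an abstract real field R : realType,
   complexified into R[i] = complex R (a numClosedFieldType). *)
From HB Require Import structures.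
From mathcomp Require Import all_boot all_order all_algebra.
From mathcomp Require Import reals.
From mathcomp Require Export complex.
Set Implicit Arguments. Unset Strict Implicit. Unset Printing Implicit Defensive.
Import Order.TTheory GRing.Theory Num.Theory.
Local Open Scope ring_scope.

Definition spd (R : realType) (k : nat) (S : 'M[R]_k) : Prop :=
  S^T = S /\ forall x : 'cV[R]_k, x != 0 -> 0 < (x^T *m S *m x) 0 0.

Definition Pmx (R : realType) p n (A1 : 'M[R]_(p, n)) : 'M[R]_n := A1^T *m A1.

(* calA = [ I_p A1 0 ; 0 P A2^T ; 0 A2 I_q ], block indices p + (n + q) *)
Definition calA (R : realType) p n q (A1 : 'M[R]_(p, n)) (A2 : 'M[R]_(q, n))
  : 'M[R]_(p + (n + q)) :=
  block_mx 1%:M (row_mx A1 0) 0 (block_mx (Pmx A1) A2^T A2 1%:M).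

(* M4 = [ I_p A1 0 ; 0 Phat A2^T ; 0 0 I_q ] *)
Definition calM4 (R : realType) p n q (A1 : 'M[R]_(p, n)) (A2 : 'M[R]_(q, n))
  (Ph : 'M[R]_n) : 'M[R]_(p + (n + q)) :=
  block_mx 1%:M (row_mx A1 0) 0 (block_mx Ph A2^T 0 1%:M).

Definition toCmx (R : realType) m k (M : 'M[R]_(m, k)) : 'M[R[i]]_(m, k) :=
  map_mx (real_complex R) M.

Definition precM (R : realType) p n q (A1 : 'M[R]_(p, n)) (A2 : 'M[R]_(q, n))
  (Ph : 'M[R]_n) : 'M[R[i]]_(p + (n + q)) :=
  toCmx (invmx (calM4 A1 A2 Ph) *m calA A1 A2).

Definition Tmx (R : realType) p n q (A1 : 'M[R]_(p, n)) (A2 : 'M[R]_(q, n))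
  (Ph : 'M[R]_n) : 'M[R[i]]_n :=
  toCmx (invmx Ph *m (Pmx A1 - A2^T *m A2)).

Definition ceigvec (F : fieldType) k (M : 'M[F]_k) (mu : F) (v : 'cV[F]_k) :=
  v != 0 /\ M *m v = mu *: v.

(* geometric multiplicity of mu for M acting on column vectors:
   dim N(M - mu I).  The row space of eigenspace M^T mu is exactly the set of
   transposes of the column vectors v with M v = mu v. *)
Definition geom_mult (F : fieldType) k (M : 'M[F]_k) (mu : F) : nat :=
  \rank (eigenspace M^T mu).

(* dim ( N(Phat - P) ∩ N(A2) ) over R; kermx X^T has as row space the
   transposes of the column null space of X *)
Definition dnull (R : realType) p n q (A1 : 'M[R]_(p, n)) (A2 : 'M[R]_(q, n))
  (Ph : 'M[R]_n) : nat :=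
  \rank (kermx (Ph - Pmx A1)^T :&: kermx A2^T)%MS.

Definition xpart p n q (F : fieldType) (v : 'cV[F]_(p + (n + q))) : 'cV[F]_p := usubmx v.
Definition ypart p n q (F : fieldType) (v : 'cV[F]_(p + (n + q))) : 'cV[F]_n := usubmx (dsubmx v).
Definition zpart p n q (F : fieldType) (v : 'cV[F]_(p + (n + q))) : 'cV[F]_q := dsubmx (dsubmx v).
Definition mk3 p n q (F : fieldType) (x : 'cV[F]_p) (y : 'cV[F]_n) (z : 'cV[F]_q)
  : 'cV[F]_(p + (n + q)) := col_mx x (col_mx y z).

(* Write an eigenvector of M4^-1 A as (x; y; z).  The eigen-equation
   A v = mu M4 v splits into three block rows:
     (1 - mu) (x + A1 y) = 0,
     P y + A2^T z = mu (Phat y + A2^T z),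
     A2 y = (mu - 1) z.
   For mu = 1 only the middle row survives, and it says (Phat - P) y = 0 and
   A2 y = 0, with x and z free.  For mu <> 1 the outer rows force x = -A1 y and
   z = A2 y / (mu - 1), and the middle one becomes the generalized problem
   (P - A2^T A2) y = mu Phat y, so y |-> (-A1 y; y; A2 y / (mu - 1)) is a
   bijection between the two eigenspaces.  The Rayleigh quotient of that
   generalized problem, taken against the positive definite forms
   P - A2^T A2, Phat and 2 Phat - (P - A2^T A2), puts mu in (0, 2). *)
From HB Require Import structures.
From mathcomp Require Import all_boot all_order all_algebra.
From mathcomp Require Import reals complex.
From mathcomp Require Import ring lra zify.
Import Order.TTheory GRing.Theory Num.Theory.
Set Implicit Arguments. Unset Strict Implicit. Unset Printing Implicit Defensive.
Local Open Scope ring_scope.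

Section LinearAlgebra.
Variable F : fieldType.

Lemma kermx_opp m k (A : 'M[F]_(m, k)) : (kermx (- A) :=: kermx A)%MS.
Proof.
by apply/eqmxP/andP; split; rewrite sub_kermx -oppr_eq0 -mulmxN ?opprK mulmx_ker.
Qed.

Lemma kermx_tr_col_mx m1 m2 k (A : 'M[F]_(m1, k)) (B : 'M[F]_(m2, k)) :
  (kermx (col_mx A B)^T :=: kermx A^T :&: kermx B^T)%MS.
Proof.
apply/eqmxP/andP; rewrite tr_col_mx; split.
  by rewrite sub_capmx !sub_kermx -row_mx_eq0 -mul_mx_row mulmx_ker.
by rewrite sub_kermx mul_mx_row row_mx_eq0 -!sub_kermx capmxSl capmxSr.
Qed.

Lemma geom_mult1_invmx k (Mm Am : 'M[F]_k) : Mm \in unitmx ->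
  geom_mult (invmx Mm *m Am) 1 = (k - \rank (Am - Mm)%R)%N.
Proof.
move=> uM; rewrite /geom_mult /eigenspace mxrank_ker -trmx1 -linearB mxrank_tr.
have -> : invmx Mm *m Am - 1%:M = invmx Mm *m (Am - Mm) by rewrite mulmxBr mulVmx.
by rewrite (eqmxMfull _ _); last by rewrite row_full_unit unitmx_inv.
Qed.

Lemma geom_mult_le_inj a b (G1 : 'M[F]_a) (G2 : 'M[F]_b) mu
    (K : 'M[F]_(b, a)) (L : 'M[F]_(a, b)) :
  (forall v : 'cV[F]_a, G1 *m v = mu *: v ->
     G2 *m (K *m v) = mu *: (K *m v) /\ L *m (K *m v) = v) ->
  (geom_mult G1 mu <= geom_mult G2 mu)%N.
Proof.
move=> KL; rewrite /geom_mult; set E := eigenspace G1^T mu.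
have eigE i : G1 *m (row i E)^T = mu *: (row i E)^T.
  have /eigenspaceP/(congr1 trmx) := row_sub i E.
  by rewrite trmx_mul trmxK linearZ.
have EK : (E *m K^T <= eigenspace G2^T mu)%MS.
  apply/row_subP => i; rewrite row_mul; apply/eigenspaceP; apply: trmx_inj.
  by rewrite !trmx_mul !trmxK linearZ /= trmx_mul trmxK (KL _ (eigE i)).1.
have EKL : E *m K^T *m L^T = E.
  apply/row_matrixP => i; rewrite 2!row_mul; apply: trmx_inj.
  by rewrite 2!trmx_mul !trmxK (KL _ (eigE i)).2.
by rewrite -EKL; apply: leq_trans (mxrankM_maxl _ _) (mxrankS EK).
Qed.

Lemma mxrank_sum_eigenspace k (g : 'M[F]_k) (s : seq F) : uniq s ->
  \rank (\sum_(a <- s) eigenspace g a)%MS = (\sum_(a <- s) \rank (eigenspace g a))%N.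
Proof.
move=> us; rewrite (big_nth 0) big_mkord (big_nth 0) big_mkord.
have inj : {in predT &, injective (fun i : 'I_(size s) => nth 0 s i)}.
  by move=> i j _ _ /eqP; rewrite nth_uniq // => /eqP /val_inj.
by move: (mxdirect_sum_eigenspace g inj) => /mxdirectP.
Qed.

Lemma mxrank_eigenspace_le_sum k (g : 'M[F]_k) (s : seq F) a : a \in s ->
  (\rank (eigenspace g a) <= \rank (\sum_(b <- s) eigenspace g b)%MS)%N.
Proof. by move=> sa; apply: mxrankS; rewrite (big_rem a sa) addsmxSl. Qed.

Lemma mxrank_adds_eigenspace k (g : 'M[F]_k) (s : seq F) a : uniq (a :: s) ->
  \rank (eigenspace g a + \sum_(b <- s) eigenspace g b)%MS
  = (\rank (eigenspace g a) + \rank (\sum_(b <- s) eigenspace g b)%MS)%N.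
Proof.
move=> uas; have /andP[_ us] := uas.
have -> : (eigenspace g a + \sum_(b <- s) eigenspace g b)%MS
    = (\sum_(b <- a :: s) eigenspace g b)%MS by rewrite big_cons.
by rewrite !mxrank_sum_eigenspace // big_cons.
Qed.

End LinearAlgebra.

Section ThreeBlocks.
Variables (F : fieldType) (p n q : nat).

Lemma mk3_parts (v : 'cV[F]_(p + (n + q))) : mk3 (xpart v) (ypart v) (zpart v) = v.
Proof. by rewrite /mk3 /xpart /ypart /zpart !vsubmxK. Qed.

Lemma ypart_mk3 (x : 'cV[F]_p) (y : 'cV[F]_n) (z : 'cV[F]_q) : ypart (mk3 x y z) = y.
Proof. by rewrite /ypart /mk3 col_mxKd col_mxKu. Qed.

End ThreeBlocks.

Section BlockPreconditioner.
Variables (F : fieldType) (p n q : nat).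
Variables (a1 : 'M[F]_(p, n)) (a2 : 'M[F]_(q, n)) (ph : 'M[F]_n).
Hypothesis ph_unit : ph \in unitmx.

Definition Amx : 'M[F]_(p + (n + q)) :=
  block_mx 1%:M (row_mx a1 0) 0 (block_mx (a1^T *m a1) a2^T a2 1%:M).
Definition Mmx : 'M[F]_(p + (n + q)) :=
  block_mx 1%:M (row_mx a1 0) 0 (block_mx ph a2^T 0 1%:M).
Definition precmx := invmx Mmx *m Amx.
Definition redmx := invmx ph *m (a1^T *m a1 - a2^T *m a2).
Definition eigvec_lift (mu : F) (y : 'cV[F]_n) : 'cV[F]_(p + (n + q)) :=
  mk3 (- (a1 *m y)) y ((mu - 1)^-1 *: (a2 *m y)).

Lemma Mmx_unit : Mmx \in unitmx.
Proof. by rewrite unitmxE !det_ublock !det1 mul1r mulr1 -unitmxE. Qed.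

Lemma precmx_eigE mu (x : 'cV[F]_p) (y : 'cV[F]_n) (z : 'cV[F]_q) :
  precmx *m mk3 x y z = mu *: mk3 x y z <->
  [/\ x + a1 *m y = mu *: (x + a1 *m y),
      a1^T *m a1 *m y + a2^T *m z = mu *: (ph *m y + a2^T *m z)
    & a2 *m y + z = mu *: z].
Proof.
rewrite /precmx -mulmxA; transitivity (Amx *m mk3 x y z = mu *: (Mmx *m mk3 x y z)).
  split=> [e | e]; first by rewrite -[LHS](mulKVmx Mmx_unit) e -scalemxAr.
  by rewrite e -scalemxAr mulKmx ?Mmx_unit.
rewrite /Amx /Mmx /mk3 !mul_block_col !mul_row_col !mul1mx !mul0mx !add0r !addr0.
rewrite !scale_col_mx.
by split=> [/eq_col_mx [? /eq_col_mx [? ?]] | [e1 e2 e3]]; last by rewrite -e1 -e2 -e3.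
Qed.

Lemma precmx_fixE (v : 'cV[F]_(p + (n + q))) : precmx *m v = v <->
  (ph - a1^T *m a1) *m ypart v = 0 /\ a2 *m ypart v = 0.
Proof.
rewrite -(mk3_parts v) ypart_mk3; move: (xpart v) (ypart v) (zpart v) => x y z.
rewrite -{2}[mk3 x y z]scale1r precmx_eigE !scale1r.
split=> [[_ e2 e3] | [e2 e3]].
  split; first by rewrite mulmxBl (addIr _ e2) subrr.
  by move/eqP: e3; rewrite -subr_eq0 addrK => /eqP.
split=> //; last by rewrite e3 add0r.
by move/eqP: e2; rewrite mulmxBl subr_eq0 => /eqP ->.
Qed.

Lemma redmx_eigE mu (y : 'cV[F]_n) :
  redmx *m y = mu *: y <-> (a1^T *m a1 - a2^T *m a2) *m y = mu *: (ph *m y).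
Proof.
rewrite /redmx -mulmxA.
by split=> [e | ->]; [rewrite -[LHS](mulKVmx ph_unit) e -scalemxAr | rewrite -scalemxAr mulKmx].
Qed.

Lemma precmx_eig_neq1 mu (v : 'cV[F]_(p + (n + q))) : mu != 1 -> precmx *m v = mu *: v ->
  redmx *m ypart v = mu *: ypart v /\ v = eigvec_lift mu (ypart v).
Proof.
move=> mu1; rewrite -(mk3_parts v) ypart_mk3 precmx_eigE.
move: (xpart v) (ypart v) (zpart v) => x y z [ex ey ez].
have mu1' : mu - 1 != 0 by rewrite subr_eq0.
have a2y : a2 *m y = (mu - 1) *: z by rewrite scalerBl scale1r -ez addrK.
split.
  apply/redmx_eigE; rewrite mulmxBl -[a2^T *m a2 *m y]mulmxA a2y -scalemxAr scalerBl scale1r.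
  move/eqP: ey; rewrite scalerDr -subr_eq => /eqP <-.
  by rewrite opprB addrA.
have -> : x = - (a1 *m y).
  apply/eqP; rewrite -addr_eq0.
  have /eqP : (mu - 1) *: (x + a1 *m y) = 0 by rewrite scalerBl scale1r -ex subrr.
  by rewrite scalemx_eq0 (negbTE mu1').
by rewrite /eigvec_lift a2y scalerA mulVf // scale1r.
Qed.

Lemma precmx_eigvec_lift mu (y : 'cV[F]_n) : mu != 1 -> redmx *m y = mu *: y ->
  precmx *m eigvec_lift mu y = mu *: eigvec_lift mu y.
Proof.
move=> mu1 /redmx_eigE; rewrite mulmxBl => /eqP; rewrite subr_eq => /eqP eP.
have mu1' : mu - 1 != 0 by rewrite subr_eq0.
have mu_inv : 1 + (mu - 1)^-1 = mu * (mu - 1)^-1.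
  by apply: (mulIf mu1'); rewrite mulrDl mul1r mulfVK // mulVf // subrK.
apply/precmx_eigE; split.
- by rewrite addNr scaler0.
- rewrite eP -!scalemxAr scalerDr scalerA -mu_inv scalerDl scale1r mulmxA.
  by rewrite addrA.
- by rewrite scalerA -mu_inv scalerDl scale1r.
Qed.

Lemma eigvec_lift_eq0 mu (y : 'cV[F]_n) : (eigvec_lift mu y == 0) = (y == 0).
Proof.
apply/eqP/eqP => [/(congr1 (@ypart p n q F)) | ->].
  by rewrite ypart_mk3 => ->; rewrite /ypart !linear0.
by rewrite /eigvec_lift /mk3 !mulmx0 oppr0 scaler0 !col_mx0.
Qed.

Lemma ceigvec_precmx_neq1 mu (v : 'cV[F]_(p + (n + q))) : mu != 1 ->
  ceigvec precmx mu v <-> exists y, ceigvec redmx mu y /\ v = eigvec_lift mu y.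
Proof.
move=> mu1; split=> [[nz /(precmx_eig_neq1 mu1) [ey ev]] | [y [[nz ey] ->]]].
  by exists (ypart v); do !split=> //; rewrite -(eigvec_lift_eq0 mu) -ev.
by split; [rewrite eigvec_lift_eq0 | exact: precmx_eigvec_lift].
Qed.

Lemma geom_mult_precmx_neq1 mu : mu != 1 ->
  geom_mult precmx mu = geom_mult redmx mu.
Proof.
move=> mu1; pose K : 'M[F]_(n, p + (n + q)) := row_mx 0 (row_mx 1%:M 0).
pose L := col_mx (- a1) (col_mx 1%:M ((mu - 1)^-1 *: a2)).
have Kv v : K *m v = ypart v.
  by rewrite -{1}[v]mk3_parts /mk3 !mul_row_col !mul0mx mul1mx add0r addr0.
have Ly y : L *m y = eigvec_lift mu y.
  by rewrite /L /eigvec_lift /mk3 !mul_col_mx mulNmx mul1mx -scalemxAl.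
apply/eqP; rewrite eqn_leq; apply/andP; split.
  apply: (geom_mult_le_inj (K := K) (L := L)) => v /(precmx_eig_neq1 mu1) [ey ev].
  by rewrite Kv Ly -ev.
apply: (geom_mult_le_inj (K := L) (L := K)) => y ey.
by rewrite Ly Kv ypart_mk3; split=> //; apply: precmx_eigvec_lift.
Qed.

Lemma geom_mult_precmx1 :
  geom_mult precmx 1 = (p + q + \rank (kermx (ph - a1^T *m a1)^T :&: kermx a2^T))%N.
Proof.
rewrite geom_mult1_invmx ?Mmx_unit //.
have -> : Amx - Mmx = block_mx 0 0 0 (block_mx (a1^T *m a1 - ph) 0 a2 0).
  by rewrite /Amx /Mmx !opp_block_mx !add_block_mx !subrr !oppr0 !addr0.
rewrite rank_diag_block_mx mxrank0 add0n block_mxEh col_mx0 rank_row_mx0.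
rewrite -[ph - _]opprB linearN (cap_eqmx (kermx_opp _) (eqmx_refl _)).
rewrite -(kermx_tr_col_mx _ _) mxrank_ker mxrank_tr.
by move: (rank_leq_col (col_mx (a1^T *m a1 - ph) a2)); set r := \rank _; lia.
Qed.

Lemma mxrank_sum_eigenspace_precmx (s : seq F) : uniq s -> {in s, forall mu, mu != 1} ->
  (\rank (\sum_(mu <- s) eigenspace precmx^T mu)%MS <= n)%N.
Proof.
move=> us s1; rewrite mxrank_sum_eigenspace //.
rewrite (eq_big_seq (fun mu => geom_mult redmx mu)); last first.
  by move=> mu /s1; apply: geom_mult_precmx_neq1.
by rewrite -mxrank_sum_eigenspace // rank_leq_col.
Qed.

End BlockPreconditioner.

Section PositiveDefinite.
Variable R : realType.
Local Open Scope complex_scope.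

Lemma spd_unit k (S : 'M[R]_k) : spd S -> S \in unitmx.
Proof.
case=> _ pos; rewrite unitmxE unitfE; apply/negP => /det0P [v nz vS].
by have := pos v^T; rewrite trmx_eq0 trmxK vS mul0mx mxE ltxx => /(_ nz).
Qed.

Lemma spd_ge0 k (S : 'M[R]_k) (x : 'cV[R]_k) : spd S -> 0 <= (x^T *m S *m x) 0 0.
Proof.
case=> _ pos; have [->|nz] := eqVneq x 0; last exact/ltW/pos.
by rewrite trmx0 !mul0mx mxE.
Qed.

Definition cform k (y : 'cV[R[i]]_k) (X : 'M[R[i]]_k) : R[i] :=
  ((map_mx conjc y)^T *m X *m y) 0 0.

Lemma cform_re_im k (S : 'M[R]_k) (a b : 'cV[R]_k) : S^T = S ->
  ((toCmx a - 'i *: toCmx b)^T *m toCmx S *m (toCmx a + 'i *: toCmx b)) 0 0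
  = ((a^T *m S *m a) 0 0 + (b^T *m S *m b) 0 0)%:C.
Proof.
move=> sym.
have toCM u v : (toCmx u)^T *m toCmx S *m toCmx v = toCmx (u^T *m S *m v).
  by rewrite /toCmx !map_mxM map_trmx.
have symS : (b^T *m S *m a) 0 0 = (a^T *m S *m b) 0 0.
  rewrite -[in LHS](trmxK (b^T *m S *m a)) [LHS]mxE.
  by rewrite !trmx_mul trmxK sym mulmxA.
rewrite linearB linearZ /= mulmxBl !mulmxDr !mulmxBl -!scalemxAl -!scalemxAr !toCM.
move: symS; move: (a^T *m S *m a) (a^T *m S *m b) (b^T *m S *m b) (b^T *m S *m a).
move=> u w t w' symS; rewrite !mxE symS mulrA -expr2 sqr_i rmorphD /=; ring.
Qed.

Lemma cform_spd_gt0 k (S : 'M[R]_k) (y : 'cV[R[i]]_k) : spd S -> y != 0 ->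
  0 < cform y (toCmx S).
Proof.
move=> hS nz; set a := map_mx (@complex.Re R) y; set b := map_mx (@complex.Im R) y.
have ey : y = toCmx a + 'i *: toCmx b.
  by apply/matrixP => i j; rewrite !mxE; case: (y i j) => r s; simpc.
have ecy : map_mx conjc y = toCmx a - 'i *: toCmx b.
  by apply/matrixP => i j; rewrite !mxE; case: (y i j) => r s; simpc.
rewrite /cform ecy [X in _ *m X]ey cform_re_im; last by case: hS.
rewrite -(rmorph0 (real_complex R)) ltcR.
have := spd_ge0 a hS; have := spd_ge0 b hS; case: hS => _ pos.
have [a0|anz] := eqVneq a 0; last by have := pos a anz; lra.
have [b0|bnz] := eqVneq b 0; last by have := pos b bnz; lra.
by move: nz; rewrite ey a0 b0 /toCmx !map_mx0 scaler0 addr0 eqxx.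
Qed.

(* Rayleigh quotients: mu = y* S y / y* Q y and 2 - mu = y* (2Q - S) y / y* Q y. *)
Lemma spd_gen_eig_bounds k (S Q : 'M[R]_k) (mu : R[i]) (y : 'cV[R[i]]_k) :
  spd S -> spd Q -> spd (2%:R *: Q - S) -> y != 0 ->
  toCmx S *m y = mu *: (toCmx Q *m y) ->
  mu \is Num.real /\ 0 < mu /\ mu < 2%:R.
Proof.
move=> hS hQ h2 nz e.
have cS := cform_spd_gt0 hS nz; have cQ := cform_spd_gt0 hQ nz.
have c2 := cform_spd_gt0 h2 nz.
have eS : cform y (toCmx S) = mu * cform y (toCmx Q).
  by rewrite /cform -mulmxA e -scalemxAr mulmxA mxE.
have e2 : cform y (toCmx (2%:R *: Q - S)) = 2%:R * cform y (toCmx Q) - cform y (toCmx S).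
  rewrite /cform /toCmx map_mxB map_mxZ rmorph_nat mulmxBr mulmxBl.
  by rewrite -scalemxAr -scalemxAl !mxE.
have mu_gt0 : 0 < mu by move: cS; rewrite eS pmulr_lgt0.
do !split => //; first exact: gtr0_real.
by rewrite -subr_gt0 -(pmulr_lgt0 _ cQ) mulrBl -eS -e2.
Qed.

End PositiveDefinite.

Section Complexification.
Variables (R : realType) (p n q : nat).
Variables (A1 : 'M[R]_(p, n)) (A2 : 'M[R]_(q, n)) (Ph : 'M[R]_n).

Lemma precM_toC : precM A1 A2 Ph = precmx (toCmx A1) (toCmx A2) (toCmx Ph).
Proof.
rewrite /precM /precmx /Amx /Mmx /calA /calM4 /Pmx /toCmx map_mxM map_invmx.
by rewrite !map_block_mx !map_row_mx !map_mx1 !map_mx0 map_mxM !map_trmx.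
Qed.

Lemma Tmx_toC : Tmx A1 A2 Ph = redmx (toCmx A1) (toCmx A2) (toCmx Ph).
Proof.
by rewrite /Tmx /redmx /Pmx /toCmx map_mxM map_invmx map_mxB !map_mxM !map_trmx.
Qed.

Lemma toCmx_subP : toCmx (Ph - Pmx A1) = toCmx Ph - (toCmx A1)^T *m toCmx A1.
Proof. by rewrite /toCmx /Pmx map_mxB map_mxM map_trmx. Qed.

Lemma dnull_toC : dnull A1 A2 Ph =
  \rank (kermx (toCmx Ph - (toCmx A1)^T *m toCmx A1)^T :&: kermx (toCmx A2)^T)%MS.
Proof.
rewrite /dnull -toCmx_subP -(mxrank_map (real_complex R)) map_capmx !map_kermx.
by rewrite -!map_trmx.
Qed.

Lemma precM_eig_bounds mu v :
  spd (Pmx A1 - A2^T *m A2) -> spd Ph -> spd (2%:R *: Ph - Pmx A1 + A2^T *m A2) ->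
  ceigvec (precM A1 A2 Ph) mu v -> mu \is Num.real /\ 0 < mu /\ mu < 2%:R.
Proof.
move=> hS hPh h2 [nz ev]; have [->|mu1] := eqVneq mu 1.
  by rewrite real1 ltr01 ltr1n.
have uPh : toCmx Ph \in unitmx by rewrite map_unitmx spd_unit.
move: ev; rewrite precM_toC => /(precmx_eig_neq1 uPh mu1) [/(redmx_eigE _ _ uPh) ey ev].
apply: (spd_gen_eig_bounds hS hPh _ _ (y := ypart v)).
- by rewrite opprB addrA addrAC.
- by rewrite -(eigvec_lift_eq0 (toCmx A1) (toCmx A2) mu) -ev.
- by move: ey; rewrite /Pmx /toCmx map_mxB !map_mxM !map_trmx.
Qed.

End Complexification.

Theorem theorem5 (R : realType) (p n q : nat)
  (A1 : 'M[R]_(p, n)) (A2 : 'M[R]_(q, n)) (Ph : 'M[R]_n) :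
  \rank A1 = n ->
  spd (Pmx A1 - A2^T *m A2) ->
  spd Ph ->
  spd (2%:R *: Ph - Pmx A1 + A2^T *m A2) ->
  let M := precM A1 A2 Ph in
  let T := Tmx A1 A2 Ph in
  let d := dnull A1 A2 Ph in
  (* (i) mu = 1: eigenspace = {(x; y; z) : (Phat - P) y = 0, A2 y = 0},
     of dimension p + q + d *)
  ((forall v : 'cV[R[i]]_(p + (n + q)),
      M *m v = v <->
      (toCmx (Ph - Pmx A1) *m ypart v = 0 /\ toCmx A2 *m ypart v = 0))
   /\ geom_mult M 1 = (p + q + d)%N)
  /\
  (* (ii) eigenvectors for mu <> 1 *)
  ((forall (mu : R[i]) (v : 'cV[R[i]]_(p + (n + q))), mu != 1 ->
      ceigvec M mu v <->
      exists y : 'cV[R[i]]_n, ceigvec T mu y /\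
        v = mk3 (- (toCmx A1 *m y)) y ((mu - 1)^-1 *: (toCmx A2 *m y)))
   /\ (forall mu : R[i], mu != 1 -> geom_mult M mu = geom_mult T mu)
   /\ (forall s : seq R[i], uniq s ->
        (forall mu, mu \in s <-> (mu != 1 /\ exists v, ceigvec M mu v)) ->
        let h := \rank (\sum_(mu <- s) eigenspace M^T mu)%MS in
        (forall mu, mu \in s -> (geom_mult M mu <= h)%N) /\ (h <= n)%N /\
        \rank (eigenspace M^T 1 + \sum_(mu <- s) eigenspace M^T mu)%MS
          = (p + q + d + h)%N))
  /\
  (* (iii) all eigenvalues are real and in (0, 2) *)
  (forall (mu : R[i]) (v : 'cV[R[i]]_(p + (n + q))), ceigvec M mu v ->
     mu \is Num.real /\ 0 < mu /\ mu < 2%:R).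
Proof.
(* Full column rank of A1 is implied by the definiteness of P - A2^T A2. *)
move=> _ hS hPh h2 M T d.
have uPh : toCmx Ph \in unitmx by rewrite map_unitmx spd_unit.
split; last (split; last by move=> mu v; apply: precM_eig_bounds).
all: subst M T d; rewrite precM_toC ?Tmx_toC dnull_toC ?toCmx_subP.
by split=> [v|]; [apply: precmx_fixE | apply: geom_mult_precmx1].
split; first by move=> mu v; apply: ceigvec_precmx_neq1.
split; first by move=> mu; apply: geom_mult_precmx_neq1.
move=> s us hs h; have s1 : {in s, forall mu, mu != 1} by move=> mu /hs [].
split; first by move=> mu; apply: mxrank_eigenspace_le_sum.
split; first exact: mxrank_sum_eigenspace_precmx.
have u1s : uniq (1 :: s) by rewrite /= us andbT; apply/negP => /s1; rewrite eqxx.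
rewrite mxrank_adds_eigenspace // -[\rank (eigenspace _ _)]/(geom_mult _ 1).
by rewrite geom_mult_precmx1.
Qed.
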